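(* Let $F$ be a Sturmian set on an alphabet $A$ with $k$ letters. For any finite $F$-maximal bifix code $X\subset F$, one has $\mathrm{Card}(X)=(k-1)\,d_F(X)+1$.
   Context: For a set $F$ of words and a word $u\in F$, $u$ is right-special if $ua\in F$ for at least two letters $a$. An infinite word $x$ over $A$ is episturmian if its set of factors $F(x)$ is closed under reversal and contains, for each $n\ge1$, at most one right-special word of length $n$; it is strict episturmian if moreover it has exactly one right-special factor of each length and every right-special factor $u$ satisfies $ua\in F(x)$ for all $a\in A$. A Sturmian set is the set of factors of a strict episturmian word. A bifix code is a set of nonempty words none of which is a proper prefix or proper suffix of another; $X\subset F$ is $F$-maximal bifix if not properly contained in a bifix code contained in $F$. A parse of $w$ with respect to $X$ is a triple $(v,x,u)$ with $w=vxu$, $v$ having no suffix in $X$, $x\in X^*$, $u$ having no prefix in $X$; $\delta_X(w)$ is the number of parses, and $d_F(X)=\max_{w\in F}\delta_X(w)$. *)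

From mathcomp Require Import all_boot.
Set Implicit Arguments. Unset Strict Implicit. Unset Printing Implicit Defensive.

Section Words.
Variable A : finType.

Definition infword := nat -> A.

Definition factor (x : infword) (w : seq A) : Prop :=
  exists i, w = mkseq (fun j => x (i + j)) (size w).

Definition right_special (F : seq A -> Prop) (u : seq A) : Prop :=
  F u /\ exists a b : A, a <> b /\ F (rcons u a) /\ F (rcons u b).

Definition episturmian (x : infword) : Prop :=
  (forall w, factor x w -> factor x (rev w)) /\
  (forall n, 1 <= n -> forall u v, size u = n -> size v = n ->
      right_special (factor x) u -> right_special (factor x) v -> u = v).

Definition strict_episturmian (x : infword) : Prop :=
  episturmian x /\
  (forall n, 1 <= n -> exists u, size u = n /\ right_special (factor x) u) /\
  (forall u, right_special (factor x) u -> forall a : A, factor x (rcons u a)).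

Definition sturmian_set (F : seq A -> Prop) : Prop :=
  exists x, strict_episturmian x /\ forall w, F w <-> factor x w.

Definition bifix_code (Y : seq A -> Prop) : Prop :=
  (forall u, Y u -> u <> [::]) /\
  (forall u v, Y u -> Y v -> prefix u v -> u = v) /\
  (forall u v, Y u -> Y v -> suffix u v -> u = v).

Definition F_maximal_bifix (F : seq A -> Prop) (X : seq A -> Prop) : Prop :=
  bifix_code X /\ (forall u, X u -> F u) /\
  (forall Y, bifix_code Y -> (forall u, Y u -> F u) ->
     (forall u, X u -> Y u) -> forall u, Y u -> X u).

(* Membership in X^* for a finite set X (given as a seq), by recursion on
   a fuel bounding the length; each factor in X consumed is nonempty in the
   decomposition (the k.+1 prefix), so fuel = size w suffices. *)
Fixpoint star_aux (X : seq (seq A)) (n : nat) (w : seq A) : bool :=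
  match n with
  | 0 => w == [::]
  | n'.+1 => (w == [::]) ||
      has (fun k => (take k.+1 w \in X) && star_aux X n' (drop k.+1 w))
          (iota 0 (size w))
  end.

Definition in_star (X : seq (seq A)) (w : seq A) : bool := star_aux X (size w) w.

Definition no_suffix_in (X : seq (seq A)) (v : seq A) : bool :=
  all (fun s => ~~ suffix s v) X.
Definition no_prefix_in (X : seq (seq A)) (u : seq A) : bool :=
  all (fun s => ~~ prefix s u) X.

(* delta_X(w): number of parses (v, x, u) of w, w = v x u, indexed by
   i = |v| and j = |v x|. *)
Definition delta (X : seq (seq A)) (w : seq A) : nat :=
  \sum_(i < (size w).+1) \sum_(j < (size w).+1)
     [&& i <= j, no_suffix_in X (take i w),
         in_star X (drop i (take j w)) & no_prefix_in X (drop j w)].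

End Words.

(* Let L be the maximal length of a word of X. Maximality forces every factor w with |w| >= L
   to have both a prefix and a suffix in X: if, say, w had no prefix in X, then by recurrence
   (a consequence of closure under reversal) w would occur again and again in factors w z,
   each occurrence contributing a parse, while counting the parses of w z from the left shows
   that delta_X(w z) = delta_X(w). Counting parses of a long factor u mid v from the right and
   from the left then shows that delta_X is constant, and maximal, on factors of length >= L.
   The proper prefixes of X are exactly the factors with no prefix in X; together with X they
   form the literal tree of X, whose leaves are X and in which a node has k sons if it is
   right-special and one otherwise. Hence Card X = (k - 1) r + 1, where r is the number of
   right-special proper prefixes of X. Since right-special factors are closed under suffixes
   and unique for each length, these are exactly the suffixes of the right-special factor w0
   of length L that have no prefix in X, so r = delta_X(w0) = d_F(X). *)

From mathcomp Require Import all_boot.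
Set Implicit Arguments. Unset Strict Implicit. Unset Printing Implicit Defensive.

Section SeqFacts.
Variable T : eqType.
Implicit Types a b c d s : seq T.

Lemma eq_cat_prefix a b c d : a ++ b = c ++ d -> size a <= size c -> prefix a c.
Proof.
move=> E le_ac; rewrite prefixE.
have := congr1 (take (size a)) E.
by rewrite take_size_cat // takel_cat // => /esym/eqP.
Qed.

Lemma eq_cat_suffix a b c d : a ++ b = c ++ d -> size b <= size d -> suffix b d.
Proof.
move=> E le_bd; rewrite -prefix_rev; apply: (@eq_cat_prefix _ (rev a) _ (rev c)).
  by rewrite -!rev_cat E.
by rewrite !size_rev.
Qed.

Lemma catsI a b c : c ++ a = c ++ b -> a = b.
Proof. by move=> /(congr1 (drop (size c))); rewrite !drop_size_cat. Qed.

Lemma catIs a b c : a ++ c = b ++ c -> a = b.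
Proof. by move=> /(congr1 rev); rewrite !rev_cat => /catsI /(congr1 rev); rewrite !revK. Qed.

Lemma dropl_cat n s1 s2 : n <= size s1 -> drop n (s1 ++ s2) = drop n s1 ++ s2.
Proof.
rewrite drop_cat; case: ltngtP => // -> _.
by rewrite subnn drop0 drop_size.
Qed.

Lemma take_size_addn_cat n s1 s2 : take (size s1 + n) (s1 ++ s2) = s1 ++ take n s2.
Proof. by rewrite take_cat ltnNge leq_addr addKn. Qed.

Lemma drop_size_addn_cat n s1 s2 : drop (size s1 + n) (s1 ++ s2) = drop n s2.
Proof. by rewrite drop_cat ltnNge leq_addr addKn. Qed.

Lemma prefix_size_eq a b : prefix a b -> size b <= size a -> a = b.
Proof.
move=> /prefixP [s ->]; rewrite size_cat -{2}[size a]addn0 leq_add2l leqn0.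
by move=> /nilP ->; rewrite cats0.
Qed.

Lemma suffix_size_eq a b : suffix a b -> size b <= size a -> a = b.
Proof.
move=> /suffixP [s ->]; rewrite size_cat -{2}[size a]add0n leq_add2r leqn0.
by move=> /nilP ->.
Qed.

Lemma take_rcons_size s y : take (size s) (rcons s y) = s.
Proof. by rewrite -cats1 take_size_cat. Qed.

Definition proper_prefixes (X : seq (seq T)) :=
  undup (flatten [seq [seq take i u | i <- iota 0 (size u)] | u <- X]).

Lemma proper_prefixesP X p :
  reflect (exists2 u, u \in X & exists2 i, i < size u & p = take i u) (p \in proper_prefixes X).
Proof.
rewrite mem_undup; apply: (iffP flatten_mapP) => [[u uX /mapP [i]]|[u uX [i lt_iu ->]]].
  by rewrite mem_iota => /andP [_ lt_iu] ->; exists u => //; exists i.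
by exists u => //; apply/mapP; exists i; rewrite ?mem_iota.
Qed.

End SeqFacts.

Lemma sum_bool_count (T : Type) (r : seq T) (p : pred T) :
  \sum_(j <- r) (p j : nat) = count p r.
Proof. by rewrite -sum1_count [RHS]big_mkcond; apply: eq_bigr => j _; case: (p j). Qed.

Lemma sum_ord_count n (p : pred nat) : \sum_(i < n) (p i : nat) = count p (iota 0 n).
Proof. by rewrite -sum_bool_count -[in RHS](subn0 n) -/(index_iota 0 n) big_mkord. Qed.

Lemma count_mem_ge (T : eqType) (p : pred T) s a : a \in s -> p a <= count p s.
Proof. by case pa: (p a) => // a_s; rewrite -has_count; apply/hasP; exists a. Qed.

Lemma count_unique (T : eqType) (p : pred T) s a :
  uniq s -> a \in s -> p a -> {in s, forall b, p b -> b = a} -> count p s = 1.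
Proof.
move=> us a_s pa p_a; rewrite (@eq_in_count _ _ (pred1 a)) ?count_uniq_mem ?a_s //.
by move=> b b_s /=; apply/idP/eqP => [/(p_a b b_s)|->].
Qed.

Lemma iota_addn m n : iota m n = map (addn m) (iota 0 n).
Proof. by rewrite -iotaDl addn0. Qed.

Lemma count_iota_le (p : pred nat) m n : m <= n ->
  count (fun j => (j <= m) && p j) (iota 0 n.+1) = count p (iota 0 m.+1).
Proof.
move=> mn; rewrite -(subnKC mn) -addSn iotaD count_cat add0n.
rewrite (@eq_in_count _ _ p); last by move=> j; rewrite mem_iota /= ltnS => ->.
rewrite [count _ (iota m.+1 _)](@eq_in_count _ _ pred0) ?count_pred0 ?addn0 //.
by move=> j; rewrite mem_iota ltnNge => /andP [/negbTE ->].
Qed.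

Lemma count_iota_ge (p : pred nat) i n : i <= n ->
  count (fun j => (i <= j) && p j) (iota 0 n.+1) = count (fun k => p (i + k)) (iota 0 (n - i).+1).
Proof.
move=> le_in; rewrite -{1}(subnKC le_in) -addnS iotaD count_cat add0n.
rewrite [count _ (iota 0 i)](@eq_in_count _ _ pred0); last first.
  by move=> j; rewrite mem_iota /= ltnNge => /negbTE ->.
rewrite count_pred0 (iota_addn i) count_map.
by apply: eq_in_count => k _ /=; rewrite leq_addr.
Qed.

Lemma sum_count_fibres (T T' : eqType) (s : seq T) (P : seq T') (g : pred T) (f : T -> T') :
  uniq P -> {in s, forall q, g q -> f q \in P} ->
  \sum_(p <- P) count (fun q => g q && (f q == p)) s = count g s.
Proof.
move=> uP; elim: s => [|q s IH] fP /=; first by rewrite big1.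
rewrite big_split /= IH; last by move=> q' q's; apply: fP; rewrite inE q's orbT.
congr (_ + _); case gq: (g q) => /=; last by rewrite big1.
rewrite sum_bool_count (@eq_count _ _ (pred1 (f q))); last by move=> p /=; rewrite eq_sym.
by rewrite count_uniq_mem // fP // mem_head.
Qed.

Section BifixCode.
Variables (A : finType) (X : seq (seq A)).
Hypothesis X_nonnil : [::] \notin X.
Hypothesis X_prefix : {in X &, forall u v, prefix u v -> u = v}.
Hypothesis X_suffix : {in X &, forall u v, suffix u v -> u = v}.

Inductive star : seq A -> Prop :=
 | star_nil : star [::]
 | star_cons u w : u \in X -> star w -> star (u ++ w).

Lemma size_X_gt0 u : u \in X -> 0 < size u.
Proof. by case: u => // uX; case/negP: X_nonnil. Qed.

Lemma size_catX_leq s u n : u \in X -> size (s ++ u) <= n.+1 -> size s <= n.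
Proof.
move=> uX; rewrite size_cat -(prednK (size_X_gt0 uX)) addnS ltnS.
by apply: leq_trans; rewrite leq_addr.
Qed.

Lemma size_Xcat_leq s u n : u \in X -> size (u ++ s) <= n.+1 -> size s <= n.
Proof. by rewrite size_cat addnC -size_cat; apply: size_catX_leq. Qed.

Lemma star_auxP n w : size w <= n -> reflect (star w) (star_aux X n w).
Proof.
elim: n w => [|n IH] w.
  by rewrite leqn0 => /nilP ->; apply: (iffP idP) => // _; exact: star_nil.
move=> le_wn; apply: (iffP idP) => /=.
  case/orP => [/eqP -> | /hasP [k]]; first exact: star_nil.
  rewrite mem_iota => /andP [_ lt_kw] /andP [kX /IH sw].
  rewrite -(cat_take_drop k.+1 w); apply: star_cons => //; apply: sw.
  by rewrite size_drop leq_subLR (leq_trans le_wn) // addSnnS leq_addl.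
move=> sw; case: sw le_wn => [|u w' uX sw'] le_wn; first by rewrite eqxx.
apply/orP; right; apply/hasP; have u_gt0 := size_X_gt0 uX.
exists (size u).-1; first by rewrite mem_iota leq0n size_cat add0n prednK // leq_addr.
rewrite prednK // take_size_cat // drop_size_cat // uX; apply/IH => //.
exact: size_Xcat_leq uX le_wn.
Qed.

Lemma in_starP w : reflect (star w) (in_star X w).
Proof. exact: star_auxP. Qed.

Lemma star_cat u v : star u -> star v -> star (u ++ v).
Proof. by elim=> // a w aX _ IH sv; rewrite -catA; apply: star_cons => //; apply: IH. Qed.

Lemma star_X u : u \in X -> star u.
Proof. by move=> uX; rewrite -(cats0 u); apply: star_cons => //; exact: star_nil. Qed.

Lemma star_last w : star w -> w <> [::] ->
  exists w' u, [/\ u \in X, star w' & w = w' ++ u].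
Proof.
elim=> // u v uX sv IH _; have [->|/eqP/IH [w' [x [xX sw' ->]]]] := eqVneq v [::].
  by exists [::], u; rewrite cats0; split => //; exact: star_nil.
by exists (u ++ w'), x; rewrite catA; split => //; apply: star_cons.
Qed.

Lemma X_cat_suffix_eq y y' u u' : u \in X -> u' \in X -> y ++ u = y' ++ u' -> u = u'.
Proof.
move=> uX u'X E; case: (leqP (size u) (size u')) => [le_uu' | /ltnW le_u'u].
  by apply: X_suffix => //; apply: eq_cat_suffix E le_uu'.
by apply/esym/X_suffix => //; apply: eq_cat_suffix (esym E) le_u'u.
Qed.

Lemma X_cat_prefix_eq y y' u u' : u \in X -> u' \in X -> u ++ y = u' ++ y' -> u = u'.
Proof.
move=> uX u'X E; case: (leqP (size u) (size u')) => [le_uu' | /ltnW le_u'u].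
  by apply: X_prefix => //; apply: eq_cat_prefix E le_uu'.
by apply/esym/X_prefix => //; apply: eq_cat_prefix (esym E) le_u'u.
Qed.

Lemma star_catr_cancel u z : star (u ++ z) -> star z -> star u.
Proof.
move: {2}(size z) (leqnn (size z)) => n; elim: n u z => [|n IH] u z.
  by rewrite leqn0 => /nilP ->; rewrite cats0.
move=> le_zn suz sz; case: (eqVneq z [::]) suz => [-> | /eqP z_nil suz]; first by rewrite cats0.
have [z' [x [xX sz' Ez]]] := star_last sz z_nil; subst z.
have uz_nil : u ++ z' ++ x <> [::].
  by move=> /(congr1 size); rewrite !size_cat -(prednK (size_X_gt0 xX)) !addnS.
have [y' [x' [x'X sy' E]]] := star_last suz uz_nil.
have eq_xx' : x' = x.
  by apply: (X_cat_suffix_eq (y := y') (y' := u ++ z') x'X xX); rewrite -catA E.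
move: E; rewrite eq_xx' catA => /catIs E; apply: (IH _ z') => //; last by rewrite E.
exact: size_catX_leq xX le_zn.
Qed.

Lemma star_catl_cancel y v : star y -> star (y ++ v) -> star v.
Proof.
elim=> [//|u y' uX sy' IH]; rewrite -catA => suyv; apply: IH.
case: {-1}_ / suyv (erefl (u ++ y' ++ v)) => [|u' z' u'X sz'] E.
  by case: u uX E => // /size_X_gt0.
have eq_uu' : u = u' := X_cat_prefix_eq uX u'X E.
by move: E; rewrite eq_uu' => /catsI ->.
Qed.

Lemma no_suffix_cat_X a u : u \in X -> no_suffix_in X (a ++ u) = false.
Proof. by move=> uX; apply/negP => /allP /(_ u uX); rewrite suffix_suffix. Qed.

Lemma no_prefix_cat_X a u : u \in X -> no_prefix_in X (u ++ a) = false.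
Proof. by move=> uX; apply/negP => /allP /(_ u uX); rewrite prefix_prefix. Qed.

Lemma no_suffix_nil : no_suffix_in X [::].
Proof. by apply/allP => u uX; rewrite suffixs0; apply: contraTneq uX => ->. Qed.

Lemma no_prefix_nil : no_prefix_in X [::].
Proof. by apply/allP => u uX; rewrite prefixs0; apply: contraTneq uX => ->. Qed.

Lemma no_suffix_inPn t : ~~ no_suffix_in X t -> exists t' u, u \in X /\ t = t' ++ u.
Proof.
rewrite /no_suffix_in -has_predC => /hasP [u uX /= /negPn /suffixP [t' ->]].
by exists t', u.
Qed.

Lemma no_prefix_inPn t : ~~ no_prefix_in X t -> exists t' u, u \in X /\ t = u ++ t'.
Proof.
rewrite /no_prefix_in -has_predC => /hasP [u uX /= /negPn /prefixP [t' ->]].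
by exists t', u.
Qed.

Lemma left_parse_exists t :
  exists i, [/\ i <= size t, no_suffix_in X (take i t) & star (drop i t)].
Proof.
move: {2}(size t) (leqnn (size t)) => n; elim: n t => [|n IH] t le_tn.
  move: le_tn; rewrite leqn0 => /nilP ->.
  by exists 0; split; [|exact: no_suffix_nil|exact: star_nil].
case: (boolP (no_suffix_in X t)) le_tn => [t_nosuf _ | /no_suffix_inPn [t' [u [uX ->]]] le_tn].
  by exists (size t); rewrite take_size drop_size; split => //; exact: star_nil.
have [|i [le_it' t'_nosuf st']] := IH t'.
  exact: size_catX_leq uX le_tn.
exists i; rewrite takel_cat // dropl_cat //; split => //.
  by rewrite size_cat (leq_trans le_it') // leq_addr.
by apply: star_cat => //; apply: star_X.
Qed.

Lemma right_parse_exists t :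
  exists j, [/\ j <= size t, star (take j t) & no_prefix_in X (drop j t)].
Proof.
move: {2}(size t) (leqnn (size t)) => n; elim: n t => [|n IH] t le_tn.
  move: le_tn; rewrite leqn0 => /nilP ->.
  by exists 0; split; [|exact: star_nil|exact: no_prefix_nil].
case: (boolP (no_prefix_in X t)) le_tn => [t_nopre _ | /no_prefix_inPn [t' [u [uX ->]]] le_tn].
  by exists 0; rewrite take0 drop0; split => //; exact: star_nil.
have [|j [le_jt' st' t'_nopre]] := IH t'.
  exact: size_Xcat_leq uX le_tn.
exists (size u + j); rewrite take_size_addn_cat drop_size_addn_cat; split => //.
  by rewrite size_cat leq_add2l.
exact: star_cons.
Qed.

(* Two left parses at i < i' would exhibit an element of X as a suffix of take i' t. *)
Lemma left_parse_uniq t i i' : i' <= size t ->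
  no_suffix_in X (take i t) -> star (drop i t) ->
  no_suffix_in X (take i' t) -> star (drop i' t) -> i' <= i.
Proof.
move=> le_i't _ s_i nosuf_i' s_i'; rewrite leqNgt; apply/negP => lt_ii'.
set u := drop i (take i' t).
have Et : drop i t = u ++ drop i' t.
  by rewrite -{1}(cat_take_drop i' t) dropl_cat // size_takel // ltnW.
have su : star u by apply: (star_catr_cancel _ s_i'); rewrite -Et.
have u_nil : u <> [::].
  by move=> /(congr1 size) /eqP; rewrite size_drop size_takel // subn_eq0 leqNgt lt_ii'.
have [u' [x [xX _ Eu]]] := star_last su u_nil.
have : take i' t = (take i t ++ u') ++ x.
  by rewrite -catA -Eu /u -{1}(take_takel t (ltnW lt_ii')) cat_take_drop.
by move=> E; move: nosuf_i'; rewrite E no_suffix_cat_X.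
Qed.

Lemma right_parse_uniq t j j' : j' <= size t ->
  star (take j t) -> no_prefix_in X (drop j t) ->
  star (take j' t) -> no_prefix_in X (drop j' t) -> j' <= j.
Proof.
move=> le_j't s_j nopre_j s_j' _; rewrite leqNgt; apply/negP => lt_jj'.
set v := drop j (take j' t).
have Et : take j' t = take j t ++ v by rewrite /v -{1}(take_takel t (ltnW lt_jj')) cat_take_drop.
have sv : star v by apply: (star_catl_cancel s_j); rewrite -Et.
have : v <> [::].
  by move=> /(congr1 size) /eqP; rewrite size_drop size_takel // subn_eq0 leqNgt lt_jj'.
case: {-1}_ / sv (erefl v) => [//|x v' xX _ Ev] _.
have : drop j t = x ++ (v' ++ drop j' t).
  by rewrite catA -Ev /v -{1}(cat_take_drop j' t) dropl_cat // size_takel // ltnW.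
by move=> E; move: nopre_j; rewrite E no_prefix_cat_X.
Qed.

Lemma left_parse_unique t :
  count (fun i => no_suffix_in X (take i t) && in_star X (drop i t)) (iota 0 (size t).+1) = 1.
Proof.
have [i [le_it nosuf_i s_i]] := left_parse_exists t.
apply: (@count_unique _ _ _ i); rewrite ?iota_uniq ?mem_iota ?ltnS ?nosuf_i //.
  exact/in_starP.
move=> j; rewrite mem_iota ltnS => /= le_jt /andP [nosuf_j /in_starP s_j].
apply: anti_leq; rewrite (left_parse_uniq le_jt nosuf_i s_i nosuf_j s_j).
exact: left_parse_uniq le_it nosuf_j s_j nosuf_i s_i.
Qed.

Lemma right_parse_unique t :
  count (fun j => in_star X (take j t) && no_prefix_in X (drop j t)) (iota 0 (size t).+1) = 1.
Proof.
have [j [le_jt s_j nopre_j]] := right_parse_exists t.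
apply: (@count_unique _ _ _ j); rewrite ?iota_uniq ?mem_iota ?ltnS ?nopre_j ?andbT //.
  exact/in_starP.
move=> k; rewrite mem_iota ltnS => /= le_kt /andP [/in_starP s_k nopre_k].
apply: anti_leq; rewrite (right_parse_uniq le_kt s_j nopre_j s_k nopre_k).
exact: right_parse_uniq le_jt s_k nopre_k s_j nopre_j.
Qed.

(* An admissible left part i has exactly one completion to a parse, so delta counts the
   admissible i; symmetrically it counts the admissible right parts j. *)
Lemma delta_nosuf w :
  delta X w = count (fun i => no_suffix_in X (take i w)) (iota 0 (size w).+1).
Proof.
rewrite /delta -sum_ord_count; apply: eq_bigr => i _.
rewrite (sum_ord_count _ (fun j => [&& i <= j, no_suffix_in X (take i w),
  in_star X (drop i (take j w)) & no_prefix_in X (drop j w)])).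
case: (no_suffix_in X (take i w)); last first.
  by rewrite (@eq_count _ _ pred0) ?count_pred0 // => j; rewrite andbF.
rewrite (@eq_count _ _ (fun j => (i <= j) &&
  (in_star X (drop i (take j w)) && no_prefix_in X (drop j w)))) //.
rewrite count_iota_ge -?size_drop; last by rewrite -ltnS.
apply: etrans (right_parse_unique (drop i w)); apply: eq_count => k /=.
by rewrite take_drop drop_drop (addnC k i).
Qed.

Lemma delta_nopre w :
  delta X w = count (fun j => no_prefix_in X (drop j w)) (iota 0 (size w).+1).
Proof.
rewrite /delta exchange_big -sum_ord_count; apply: eq_bigr => j _.
rewrite (sum_ord_count _ (fun i => [&& i <= j, no_suffix_in X (take i w),
  in_star X (drop i (take j w)) & no_prefix_in X (drop j w)])).
case: (no_prefix_in X (drop j w)); last first.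
  by rewrite (@eq_count _ _ pred0) ?count_pred0 // => i; rewrite !andbF.
have le_jw : j <= size w by rewrite -ltnS.
rewrite (@eq_count _ _ (fun i => (i <= j) &&
  (no_suffix_in X (take i (take j w)) && in_star X (drop i (take j w))))).
  rewrite count_iota_le // -[in iota 0 j.+1](size_takel le_jw).
  exact: etrans (left_parse_unique (take j w)) _.
by move=> i /=; rewrite andbT; case: (leqP i j) => //= le_ij; rewrite take_takel.
Qed.

Lemma delta_catl_eq r v :
  (forall h, h < size r -> ~~ no_prefix_in X (drop h (r ++ v))) ->
  delta X (r ++ v) = delta X v.
Proof.
move=> has_pre; rewrite !delta_nopre size_cat -addnS iotaD count_cat add0n.
rewrite [count _ (iota 0 _)](@eq_in_count _ _ pred0); last first.
  by move=> h; rewrite mem_iota => /andP [_ /has_pre /negbTE].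
rewrite count_pred0 (iota_addn (size r)) count_map.
by apply: eq_count => h /=; rewrite drop_size_addn_cat.
Qed.

Lemma delta_catr_eq u r :
  (forall i, size u < i <= size u + size r -> ~~ no_suffix_in X (take i (u ++ r))) ->
  delta X (u ++ r) = delta X u.
Proof.
move=> has_suf; rewrite !delta_nosuf size_cat -addSn iotaD count_cat add0n.
rewrite [count _ (iota (size u).+1 _)](@eq_in_count _ _ pred0); last first.
  move=> i; rewrite mem_iota addSn => /andP [lt_ui le_i]; apply/negbTE/has_suf.
  by rewrite lt_ui -ltnS.
rewrite count_pred0 addn0; apply: eq_in_count => i.
by rewrite mem_iota ltnS /= => le_iu; rewrite takel_cat.
Qed.

Lemma delta_catl_ge u t : 0 < size u ->
  delta X t + no_prefix_in X (u ++ t) <= delta X (u ++ t).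
Proof.
move=> u_gt0; rewrite !delta_nopre size_cat -addnS iotaD count_cat add0n addnC.
rewrite (iota_addn (size u)) count_map.
rewrite [count (preim _ _) _](@eq_count _ _ (fun j => no_prefix_in X (drop j t))); last first.
  by move=> h /=; rewrite drop_size_addn_cat.
rewrite leq_add2r -[in no_prefix_in _ (u ++ t)](drop0 (u ++ t)).
by apply: (count_mem_ge (fun j => no_prefix_in X (drop j (u ++ t)))); rewrite mem_iota.
Qed.

Lemma delta_catr_ge t u : 0 < size u ->
  delta X t + no_suffix_in X (t ++ u) <= delta X (t ++ u).
Proof.
move=> u_gt0; rewrite !delta_nosuf size_cat -addSn iotaD count_cat add0n.
rewrite [in R in _ <= R](@eq_in_count _ _ (fun i => no_suffix_in X (take i t))); last first.
  by move=> i; rewrite mem_iota ltnS /= => le_it; rewrite takel_cat.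
rewrite leq_add2l -[in no_suffix_in _ (t ++ u)](take_size (t ++ u)) size_cat.
apply: (count_mem_ge (fun i => no_suffix_in X (take i (t ++ u)))).
by rewrite mem_iota addSn ltnS leqnn andbT -addn1 leq_add2l.
Qed.

End BifixCode.

Section InfiniteWord.
Variables (A : finType) (x : infword A).

Definition factor_at i n := mkseq (fun j => x (i + j)) n.

Lemma size_factor_at i n : size (factor_at i n) = n.
Proof. exact: size_mkseq. Qed.

Lemma factor_atD i m n : factor_at i (m + n) = factor_at i m ++ factor_at (i + m) n.
Proof.
rewrite /factor_at /mkseq iotaD map_cat (iota_addn m) -map_comp; congr (_ ++ _).
by apply: eq_map => k /=; rewrite addnA.
Qed.

Lemma take_factor_at i m n : m <= n -> take m (factor_at i n) = factor_at i m.
Proof. by move=> le_mn; rewrite -(subnKC le_mn) factor_atD take_size_cat // size_factor_at. Qed.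

Lemma drop_factor_at i m n : m <= n -> drop m (factor_at i n) = factor_at (i + m) (n - m).
Proof. by move=> le_mn; rewrite -{1}(subnKC le_mn) factor_atD drop_size_cat // size_factor_at. Qed.

Lemma factor_at_split i j n : i <= j ->
  factor_at i (j - i + n) = factor_at i (j - i) ++ factor_at j n.
Proof. by move=> le_ij; rewrite factor_atD subnKC. Qed.

Lemma factor_at_gap i j n m : i + n <= j ->
  factor_at i (j - i + m) = factor_at i n ++ drop n (factor_at i (j - i)) ++ factor_at j m.
Proof.
move=> le_j; have le_ij : i <= j := leq_trans (leq_addr _ _) le_j.
rewrite factor_at_split // -{1}(cat_take_drop n (factor_at i _)) take_factor_at -?catA //.
by rewrite leq_subRL.
Qed.

Lemma factorP w : factor x w -> exists i, w = factor_at i (size w).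
Proof. by case=> i E; exists i. Qed.

Lemma factor_factor_at i n : factor x (factor_at i n).
Proof. by exists i; rewrite size_factor_at. Qed.

Lemma factor_take w m : factor x w -> factor x (take m w).
Proof.
case=> i ->; case: (leqP m (size w)) => [le_mw | /ltnW lt_wm].
  rewrite take_factor_at //; exact: factor_factor_at.
rewrite take_oversize ?size_factor_at //; exact: factor_factor_at.
Qed.

Lemma factor_drop w m : factor x w -> factor x (drop m w).
Proof.
case=> i ->; case: (leqP m (size w)) => [le_mw | /ltnW lt_wm].
  rewrite drop_factor_at //; exact: factor_factor_at.
by rewrite drop_oversize ?size_factor_at //; exists 0.
Qed.

Lemma factor_rcons w : factor x w -> exists a, factor x (rcons w a).
Proof.
case/factorP=> i E; exists (x (i + size w)).
suff -> : rcons w (x (i + size w)) = factor_at i (size w + 1) by exact: factor_factor_at.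
by rewrite factor_atD -E -cats1 /factor_at /mkseq /= addn0.
Qed.

Lemma rs_drop u j : right_special (factor x) u -> j <= size u ->
  right_special (factor x) (drop j u).
Proof.
move=> [fu [a [b [ab [fa fb]]]]] le_ju; split; first exact: factor_drop.
by exists a, b; rewrite -!drop_rcons //; split => //; split; apply: factor_drop.
Qed.

Hypothesis factor_rev : forall w, factor x w -> factor x (rev w).

(* With rev x[0, m) occurring at j, the mirror image of x[0, m + j) starts with x[0, m); if it
   occurs at 0, then x[0, m + j) is a palindrome. *)
Lemma prefix_reoccurs_or_palindrome m :
  (exists2 j, 0 < j & factor_at j m = factor_at 0 m) \/
  (exists2 n, m <= n & rev (factor_at 0 n) = factor_at 0 n).
Proof.
have [j Ej] := factorP (factor_rev (factor_factor_at 0 m)).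
rewrite size_rev size_factor_at in Ej.
have [j' Ej'] := factorP (factor_rev (factor_factor_at 0 (m + j))).
rewrite size_rev size_factor_at in Ej'.
have E : take m (rev (factor_at 0 (m + j))) = factor_at 0 m.
  by rewrite addnC factor_atD rev_cat add0n -Ej revK take_size_cat // size_factor_at.
case: (posnP j') => [j'0 | j'_gt0]; last first.
  by left; exists j' => //; rewrite -E Ej' take_factor_at // leq_addr.
by right; exists (m + j); rewrite ?leq_addr // Ej' j'0.
Qed.

(* Of two palindromic prefixes p, q with |p| < |q|, p is also a suffix of q, so it reoccurs. *)
Lemma prefix_reoccurs m : exists2 j, 0 < j & factor_at j m = factor_at 0 m.
Proof.
case: (prefix_reoccurs_or_palindrome m) => [//|[n1 le_mn1 pal1]].
have [[j j_gt0 E]|[n2 lt_n12 pal2]] := prefix_reoccurs_or_palindrome n1.+1.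
  exists j => //; rewrite -(take_factor_at j le_mn1) -(take_factor_at 0 le_mn1).
  by rewrite -(take_factor_at j (leqnSn n1)) -(take_factor_at 0 (leqnSn n1)) E.
have le_n12 : n1 <= n2 by apply: ltnW.
have E : factor_at (n2 - n1) n1 = factor_at 0 n1.
  have := drop_factor_at 0 (leq_subr n1 n2); rewrite add0n subKn // => <-.
  by rewrite -pal2 drop_rev size_factor_at subKn // take_factor_at // pal1.
exists (n2 - n1); first by rewrite subn_gt0.
by rewrite -(take_factor_at (n2 - n1) le_mn1) E take_factor_at.
Qed.

Lemma prefix_recurrent m B : exists2 j, B <= j & factor_at j m = factor_at 0 m.
Proof.
elim: B => [|B [j le_Bj E]]; first by exists 0.
have [j2 j2_gt0 E2] := prefix_reoccurs (j + m).
exists (j2 + j); first by rewrite -addn1 addnC leq_add.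
have := congr1 (drop j) E2; rewrite !drop_factor_at ?leq_addr // addKn add0n E.
by rewrite addnC.
Qed.

Lemma factor_recurrent w B : factor x w -> exists2 j, B <= j & w = factor_at j (size w).
Proof.
case/factorP=> i E; have [j le_Bj Ej] := prefix_recurrent (i + size w) B.
exists (j + i); first exact: leq_trans le_Bj (leq_addr _ _).
by have := congr1 (drop i) Ej; rewrite !drop_factor_at ?leq_addr // add0n addKn -E.
Qed.

End InfiniteWord.

Section MaximalBifixCode.
Variables (A : finType) (x : infword A) (X : seq (seq A)).
Hypothesis factor_rev : forall w, factor x w -> factor x (rev w).
Hypothesis X_nonnil : [::] \notin X.
Hypothesis X_prefix : {in X &, forall u v, prefix u v -> u = v}.
Hypothesis X_suffix : {in X &, forall u v, suffix u v -> u = v}.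
Hypothesis X_factor : forall u, u \in X -> factor x u.
Hypothesis X_maximal : forall Y, bifix_code Y -> (forall u, Y u -> factor x u) ->
  (forall u, u \in X -> Y u) -> forall u, Y u -> u \in X.

Let L := \max_(u <- X) size u.

Lemma size_X_le u : u \in X -> size u <= L.
Proof. by move=> uX; apply: (@leq_bigmax_seq _ X xpredT). Qed.

(* Otherwise X + y would still be a bifix code of factors. *)
Lemma long_factor_not_free y : factor x y -> 0 < size y -> L <= size y ->
  no_prefix_in X y -> no_suffix_in X y -> False.
Proof.
move=> fy y_gt0 le_Ly nopre_y nosuf_y; pose Y u := u \in X \/ u = y.
have Y_bifix : bifix_code Y.
  split; [|split].
  - by move=> u [/(size_X_gt0 X_nonnil) | ->]; [case: u | move=> y_nil; rewrite y_nil in y_gt0].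
  - move=> u v [uX|->] [vX|->] // uv; first exact: X_prefix.
      by move/allP: nopre_y => /(_ u uX); rewrite uv.
    by apply: prefix_size_eq uv (leq_trans (size_X_le vX) le_Ly).
  - move=> u v [uX|->] [vX|->] // uv; first exact: X_suffix.
      by move/allP: nosuf_y => /(_ u uX); rewrite uv.
    by apply: suffix_size_eq uv (leq_trans (size_X_le vX) le_Ly).
have yX : y \in X by apply: (X_maximal Y_bifix) => [u [/X_factor|->] | u | ]; [| | left | right].
by move/allP: nopre_y => /(_ y yX); rewrite prefix_refl.
Qed.

Lemma X_nonempty : 0 < size X.
Proof.
case: (posnP (size X)) => // /size0nil X_nil; exfalso.
apply: (@long_factor_not_free [:: x 0]); first by exists 0.
all: by rewrite /L /no_prefix_in /no_suffix_in ?X_nil ?big_nil.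
Qed.

Lemma maxlen_gt0 : 0 < L.
Proof.
have := X_nonempty; case X_eq: X => [//|u X'] _.
have uX : u \in X by rewrite X_eq mem_head.
exact: leq_trans (size_X_gt0 X_nonnil uX) (size_X_le uX).
Qed.

Lemma no_prefix_catr w s : no_prefix_in X w -> L <= size w -> no_prefix_in X (w ++ s).
Proof.
move=> nopre_w le_Lw; apply/allP => u uX; apply/negP => uws.
move/allP: nopre_w => /(_ u uX) /negP; apply; move: uws; rewrite !prefixE.
by rewrite takel_cat // (leq_trans (size_X_le uX) le_Lw).
Qed.

Lemma no_suffix_catl s w : no_suffix_in X w -> L <= size w -> no_suffix_in X (s ++ w).
Proof.
move=> nosuf_w le_Lw; apply/allP => u uX; apply/negP => /suffixP [t E].
move/allP: nosuf_w => /(_ u uX); rewrite (eq_cat_suffix (esym E)) //.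
exact: leq_trans (size_X_le uX) le_Lw.
Qed.

Section LongFreeFactor.
Variable w : seq A.
Hypotheses (w_factor : factor x w) (le_Lw : L <= size w).

Let w_gt0 : 0 < size w := leq_trans maxlen_gt0 le_Lw.

(* Every prefix of w z longer than w is long and has no prefix in X, hence has a suffix in X. *)
Lemma delta_nopre_catr z : no_prefix_in X w -> factor x (w ++ z) ->
  delta X (w ++ z) = delta X w.
Proof.
move=> nopre_w fwz; apply: delta_catr_eq => // i /andP [lt_wi le_i]; apply/negP => nosuf_i.
have size_i : size (take i (w ++ z)) = i by rewrite size_takel // size_cat.
apply: (@long_factor_not_free (take i (w ++ z))); rewrite ?size_i.
- exact: factor_take.
- exact: leq_ltn_trans (leq0n _) lt_wi.
- exact: leq_trans le_Lw (ltnW lt_wi).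
- by rewrite take_cat ltnNge (ltnW lt_wi) no_prefix_catr.
- exact: nosuf_i.
Qed.

Lemma delta_nosuf_catl z : no_suffix_in X w -> factor x (z ++ w) ->
  delta X (z ++ w) = delta X w.
Proof.
move=> nosuf_w fzw; apply: delta_catl_eq => // h lt_hz; apply/negP => nopre_h.
have Eh : drop h (z ++ w) = drop h z ++ w by rewrite dropl_cat // ltnW.
have le_Lh : L <= size (drop h (z ++ w)) by rewrite Eh size_cat (leq_trans le_Lw) // leq_addl.
apply: (@long_factor_not_free (drop h (z ++ w))) => //.
- exact: factor_drop.
- exact: leq_trans maxlen_gt0 le_Lh.
- by rewrite Eh no_suffix_catl.
Qed.

(* By recurrence, w occurs again far to the right; each occurrence adds a parse. *)
Lemma delta_nopre_unbounded N B : no_prefix_in X w ->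
  exists i n z, [/\ B <= i, factor_at x i n = w ++ z & N <= delta X (w ++ z)].
Proof.
move=> nopre_w; elim: N B => [|N IH] B.
all: have [i le_Bi Ei] := factor_recurrent factor_rev B w_factor.
  by exists i, (size w), [::]; rewrite cats0.
have [i' [n' [z' [le_i' Ez' ltN]]]] := IH (i + size w).
set mid := drop (size w) (factor_at x i (i' - i)).
exists i, (i' - i + n'), (mid ++ w ++ z'); split => //.
  by rewrite (factor_at_gap _ _ le_i') Ez' -Ei.
rewrite catA; apply: leq_trans (delta_catl_ge X_nonnil X_suffix _ _).
  by rewrite -catA no_prefix_catr // addn1.
by rewrite size_cat (leq_trans w_gt0) ?leq_addr.
Qed.

Lemma delta_nosuf_unbounded N : no_suffix_in X w ->
  exists i n z, factor_at x i n = z ++ w /\ N <= delta X (z ++ w).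
Proof.
move=> nosuf_w; elim: N => [|N [i [n [z [Ez ltN]]]]].
  by have [i _ Ei] := factor_recurrent factor_rev 0 w_factor; exists i, (size w), [::].
have [j le_j Ej] := factor_recurrent factor_rev (i + n) w_factor.
set mid := drop n (factor_at x i (j - i)).
exists i, (j - i + size w), ((z ++ w) ++ mid); split.
  by rewrite (factor_at_gap _ _ le_j) -Ej Ez -!catA.
rewrite -catA; apply: leq_trans (delta_catr_ge X_nonnil X_prefix _ _).
  by rewrite catA no_suffix_catl // addn1.
by rewrite size_cat (leq_trans w_gt0) ?leq_addl.
Qed.

End LongFreeFactor.

Lemma long_factor_has_prefix w : factor x w -> L <= size w -> ~~ no_prefix_in X w.
Proof.
move=> fw le_Lw; apply/negP => nopre_w.
have [i [n [z [_ Ez lt_wz]]]] := delta_nopre_unbounded fw le_Lw (delta X w).+1 0 nopre_w.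
have fwz : factor x (w ++ z) by rewrite -Ez; exact: factor_factor_at.
by move: lt_wz; rewrite delta_nopre_catr // ltnn.
Qed.

Lemma long_factor_has_suffix w : factor x w -> L <= size w -> ~~ no_suffix_in X w.
Proof.
move=> fw le_Lw; apply/negP => nosuf_w.
have [i [n [z [Ez lt_zw]]]] := delta_nosuf_unbounded fw le_Lw (delta X w).+1 nosuf_w.
have fzw : factor x (z ++ w) by rewrite -Ez; exact: factor_factor_at.
by move: lt_zw; rewrite delta_nosuf_catl // ltnn.
Qed.

(* In a factor u ++ mid ++ v, the right parses are those of v and the left parses those of u. *)
Lemma delta_long_factors_eq u v :
  factor x u -> factor x v -> L <= size u -> L <= size v -> delta X u = delta X v.
Proof.
move=> fu fv le_Lu le_Lv; have [i Ei] := factorP fu.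
have [j le_j Ej] := factor_recurrent factor_rev (i + size u) fv.
set mid := drop (size u) (factor_at x i (j - i)).
have E : factor_at x i (j - i + size v) = (u ++ mid) ++ v.
  by rewrite (factor_at_gap _ _ le_j) -Ei -Ej catA.
have fumv : factor x ((u ++ mid) ++ v) by rewrite -E; exact: factor_factor_at.
rewrite -(@delta_catl_eq _ _ X_nonnil X_suffix (u ++ mid) v); last first.
  move=> h lt_h; apply: long_factor_has_prefix; first exact: factor_drop.
  by rewrite dropl_cat ?(ltnW lt_h) // size_cat (leq_trans le_Lv) // leq_addl.
rewrite -catA (@delta_catr_eq _ _ X_nonnil X_prefix) // => k /andP [lt_uk le_k].
apply: long_factor_has_suffix; first by apply: factor_take; rewrite catA.
by rewrite size_takel ?(leq_trans le_Lu (ltnW lt_uk)) // size_cat.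
Qed.

Lemma delta_le_long_factor w w0 : factor x w -> factor x w0 -> L <= size w0 ->
  delta X w <= delta X w0.
Proof.
move=> fw fw0 le_Lw0; have [i Ei] := factorP fw.
have E : factor_at x i (size w + L) = w ++ factor_at x (i + size w) L.
  by rewrite factor_atD -Ei.
rewrite -(@delta_long_factors_eq (w ++ factor_at x (i + size w) L) w0) //; last first.
- by rewrite size_cat size_factor_at leq_addl.
- by rewrite -E; exact: factor_factor_at.
apply: leq_trans (delta_catr_ge X_nonnil X_prefix _ _); first exact: leq_addr.
by rewrite size_factor_at maxlen_gt0.
Qed.

Section LiteralTree.
Hypothesis X_uniq : uniq X.
Hypothesis rs_extends : forall u, right_special (factor x) u -> forall a, factor x (rcons u a).
Hypothesis rs_uniq : forall u v, size u = size v ->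
  right_special (factor x) u -> right_special (factor x) v -> u = v.
Hypothesis card_A_gt1 : 1 < #|A|.

Let P := proper_prefixes X.
Let tree := P ++ X.
Let nchildren p := count (fun a => rcons p a \in tree) (enum A).

Lemma P_no_prefix p : p \in P -> no_prefix_in X p.
Proof.
case/proper_prefixesP => u uX [i lt_iu ->]; apply/allP => v vX; apply/negP => vu.
have eq_vu : v = u by apply: X_prefix => //; exact: prefix_trans vu (prefix_take _ _).
by have := size_prefix vu; rewrite eq_vu size_take lt_iu leqNgt lt_iu.
Qed.

Lemma P_factor p : p \in P -> factor x p.
Proof. by case/proper_prefixesP => u uX [i _ ->]; apply/factor_take/X_factor. Qed.

Lemma size_P_lt p : p \in P -> size p < L.
Proof.
case/proper_prefixesP => u uX [i lt_iu ->]; rewrite size_take lt_iu.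
exact: leq_trans lt_iu (size_X_le uX).
Qed.

(* p is a proper prefix of the element of X that starts a long right extension of p. *)
Lemma factor_no_prefix_P p : factor x p -> no_prefix_in X p -> p \in P.
Proof.
move=> fp nopre_p; have [i Ei] := factorP fp.
have E : factor_at x i (size p + L) = p ++ factor_at x (i + size p) L.
  by rewrite factor_atD -Ei.
have := @long_factor_has_prefix (factor_at x i (size p + L)) (factor_factor_at _ _ _).
rewrite size_factor_at leq_addl E => /(_ isT) /(no_prefix_inPn) [t' [v [vX Ev]]].
case: (leqP (size v) (size p)) => [le_vp | lt_pv].
  by move/allP: nopre_p => /(_ v vX); rewrite (eq_cat_prefix (esym Ev) le_vp).
apply/proper_prefixesP; exists v => //; exists (size p) => //.
by apply/esym/eqP; rewrite -prefixE (eq_cat_prefix Ev) // ltnW.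
Qed.

Lemma nil_P : [::] \in P.
Proof.
have := X_nonempty; case X_eq: X => [//|u X'] _.
have uX : u \in X by rewrite X_eq mem_head.
by apply/proper_prefixesP; exists u => //; exists 0; rewrite ?take0 ?(size_X_gt0 X_nonnil uX).
Qed.

Lemma tree_uniq : uniq tree.
Proof.
rewrite cat_uniq undup_uniq X_uniq andbT /=; apply/hasPn => u uX.
by apply/negP => /P_no_prefix /allP /(_ u uX); rewrite prefix_refl.
Qed.

Lemma tree_parent q : q \in tree -> q != [::] -> take (size q).-1 q \in P.
Proof.
case/lastP: q => [//|q a] q_tree _; rewrite size_rcons take_rcons_size.
move: q_tree; rewrite mem_cat => /orP [/proper_prefixesP [u uX [i lt_iu E]] | qaX].
  have size_i : (size q).+1 = i by rewrite -(size_rcons q a) E size_takel // ltnW.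
  apply/proper_prefixesP; exists u => //; exists (size q).
    by rewrite (ltn_trans _ lt_iu) // -size_i.
  by rewrite -{1}(take_rcons_size q a) E take_takel // -size_i.
apply/proper_prefixesP; exists (rcons q a) => //.
by exists (size q); rewrite ?size_rcons ?take_rcons_size.
Qed.

Lemma tree_factor q : q \in tree -> factor x q.
Proof. by rewrite mem_cat => /orP [/P_factor | /X_factor]. Qed.

(* Extending p by a letter keeps it free of prefixes in X or completes it to an element of X. *)
Lemma rcons_P_tree p a : p \in P -> factor x (rcons p a) -> rcons p a \in tree.
Proof.
move=> pP fpa; rewrite mem_cat; case: (boolP (no_prefix_in X (rcons p a))) => [nopre_pa | ].
  by rewrite factor_no_prefix_P.
case/no_prefix_inPn => t' [v [vX Ev]]; have Ev' : p ++ [:: a] = v ++ t' by rewrite cats1.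
case: (leqP (size v) (size p)) => [le_vp | lt_pv].
  by move/allP: (P_no_prefix pP) => /(_ v vX); rewrite (eq_cat_prefix (esym Ev') le_vp).
suff t'_nil : t' = [::] by rewrite Ev t'_nil cats0 vX orbT.
by apply/size0nil/eqP; rewrite -leqn0 -(leq_add2l (size v)) addn0 -size_cat -Ev size_rcons.
Qed.

Lemma count_children p : p \in P ->
  count (fun q => (q != [::]) && (take (size q).-1 q == p)) tree = nchildren p.
Proof.
move=> pP; rewrite /nchildren -!size_filter -(size_map (rcons p)).
apply/perm_size/uniq_perm; first exact: filter_uniq tree_uniq.
  by rewrite (map_inj_uniq (@rcons_injr _ p)) filter_uniq // enum_uniq.
move=> q; rewrite mem_filter; apply/idP/mapP => [|[a]].
  case/lastP: q => [//|q a]; rewrite size_rcons take_rcons_size.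
  move=> /andP [/andP [_ /eqP ->] qa_tree].
  by exists a; rewrite // mem_filter qa_tree mem_enum.
rewrite mem_filter => /andP [pa_tree _] ->.
by rewrite pa_tree size_rcons take_rcons_size eqxx; case: (p).
Qed.

Lemma nchildren_gt0 p : p \in P -> 0 < nchildren p.
Proof.
move=> pP; have [a fpa] := factor_rcons (P_factor pP).
by rewrite -has_count; apply/hasP; exists a; rewrite ?mem_enum ?rcons_P_tree.
Qed.

Lemma nchildren_rs p : p \in P -> right_special (factor x) p -> nchildren p = #|A|.
Proof.
move=> pP rs_p; rewrite /nchildren cardE -count_predT.
by apply: eq_in_count => a _ /=; apply: rcons_P_tree => //; apply: rs_extends.
Qed.

Lemma rs_nchildren p : p \in P -> 1 < nchildren p -> right_special (factor x) p.
Proof.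
move=> pP; rewrite /nchildren -size_filter.
have : uniq [seq a <- enum A | rcons p a \in tree] by rewrite filter_uniq ?enum_uniq.
have : forall a, a \in [seq a <- enum A | rcons p a \in tree] -> factor x (rcons p a).
  by move=> a; rewrite mem_filter => /andP [/tree_factor].
case: [seq a <- enum A | rcons p a \in tree] => [|a [|b s]] //= fab /andP [].
rewrite inE negb_or => /andP [ab _] _ _; split; first exact: P_factor.
by exists a, b; split; [apply/eqP | split; apply: fab; rewrite !inE eqxx ?orbT].
Qed.

Lemma nchildren_eq p : p \in P -> nchildren p = 1 + (#|A| - 1) * (1 < nchildren p).
Proof.
move=> pP; case: ltnP => [/(rs_nchildren pP) /(nchildren_rs pP) -> | le_n1].
  by rewrite muln1 subnKC // ltnW.
by apply/eqP; rewrite muln0 eqn_leq le_n1 nchildren_gt0.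
Qed.

(* Counting the nodes of the literal tree P ++ X through their parents. *)
Lemma size_X_branching : size X = (#|A| - 1) * count (fun p => 1 < nchildren p) P + 1.
Proof.
have S0 : count (fun q => q == [::]) tree = 1.
  by rewrite (@eq_count _ _ (pred1 [::])) // count_uniq_mem ?tree_uniq // mem_cat nil_P.
have S1 : count (fun q => q != [::]) tree =
          \sum_(p <- P) count (fun q => (q != [::]) && (take (size q).-1 q == p)) tree.
  by rewrite sum_count_fibres ?undup_uniq // => q q_tree; apply: tree_parent.
have size_tree : size tree = \sum_(p <- P) nchildren p + 1.
  rewrite -(count_predC (fun q => q != [::])) S1 -S0; congr (_ + _).
    by apply: eq_big_seq => p pP; rewrite count_children.
  by apply: eq_count => q /=; rewrite negbK.
have sum_nchildren :
    \sum_(p <- P) nchildren p = \sum_(p <- P) (1 + (#|A| - 1) * (1 < nchildren p)).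
  by apply: eq_big_seq => p /nchildren_eq.
move: size_tree; rewrite sum_nchildren big_split /= sum1_size -big_distrr /=.
by rewrite sum_bool_count size_cat -addnA => /addnI.
Qed.

Section RightSpecialOfMaxLength.
Variable w0 : seq A.
Hypotheses (size_w0 : size w0 = L) (rs_w0 : right_special (factor x) w0).

Let suffixes := [seq drop j w0 | j <- iota 0 (size w0).+1].

Lemma suffixes_uniq : uniq suffixes.
Proof.
rewrite map_inj_in_uniq ?iota_uniq // => j j'.
rewrite !mem_iota !ltnS => /andP [_ le_j] /andP [_ le_j'] /(congr1 size).
by rewrite !size_drop => /(congr1 (subn (size w0))); rewrite !subKn.
Qed.

(* Right-special factors are suffixes of longer ones, and there is one of each length. *)
Lemma branching_suffix p : p \in P -> (1 < nchildren p) = (p \in suffixes).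
Proof.
move=> pP; apply/idP/mapP => [/(rs_nchildren pP) rs_p | [j]].
  exists (L - size p); first by rewrite mem_iota size_w0 ltnS leq_subr.
  apply: rs_uniq => //; last by apply: rs_drop; rewrite // size_w0 leq_subr.
  by rewrite size_drop size_w0 subKn // ltnW // size_P_lt.
rewrite mem_iota ltnS => /andP [_ le_j] Ep.
by rewrite (nchildren_rs pP) // Ep; apply: rs_drop.
Qed.

Lemma delta_rs_maxlen : delta X w0 = count (fun p => 1 < nchildren p) P.
Proof.
rewrite (delta_nopre X_nonnil X_suffix).
rewrite (@eq_in_count _ _ (fun j => drop j w0 \in P)); last first.
  move=> j _ /=; apply/idP/idP => [|/P_no_prefix //].
  by apply: factor_no_prefix_P; apply: factor_drop; case: rs_w0.
rewrite -(count_map (drop ^~ w0) (mem P)) -!size_filter; apply/perm_size/uniq_perm.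
- exact: filter_uniq suffixes_uniq.
- exact: filter_uniq (undup_uniq _).
move=> q; rewrite !mem_filter -[mem P q]/(q \in P).
by case qP: (q \in P); rewrite ?andbT ?andbF // (branching_suffix qP).
Qed.

End RightSpecialOfMaxLength.
End LiteralTree.
End MaximalBifixCode.

Section StrictEpisturmian.
Variables (A : finType) (x : infword A).
Hypothesis x_strict : strict_episturmian x.

Lemma strict_episturmian_rev w : factor x w -> factor x (rev w).
Proof. by case: x_strict => [[x_rev _] _]; apply: x_rev. Qed.

Lemma strict_episturmian_rs_extends u :
  right_special (factor x) u -> forall a, factor x (rcons u a).
Proof. by case: x_strict => _ [_ rs_ext]; apply: rs_ext. Qed.

(* The two letters following the right-special factor of length 1 are factors. *)
Lemma strict_episturmian_rs_nil : right_special (factor x) [::].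
Proof.
case: x_strict => _ [/(_ 1 (leqnn 1)) [c [size_c [_ [a [b [ab [fca fcb]]]]]]] _].
have last_letter d : factor x (rcons c d) -> factor x [:: d].
  by move/(factor_drop 1); rewrite -cats1 drop_size_cat.
by split; [exists 0 | exists a, b; split => //; split; apply: last_letter].
Qed.

Lemma strict_episturmian_rs_uniq u v : size u = size v ->
  right_special (factor x) u -> right_special (factor x) v -> u = v.
Proof.
case: x_strict => [[_ rs_uniq] _].
case: (posnP (size u)) => [/size0nil -> /esym /size0nil -> // | u_gt0 uv].
exact: (rs_uniq (size u)).
Qed.

Lemma strict_episturmian_rs_exists n : exists u, size u = n /\ right_special (factor x) u.
Proof.
case: n => [|n]; first by exists [::]; split => //; exact: strict_episturmian_rs_nil.
by case: x_strict => _ [/(_ n.+1 isT)].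
Qed.

Lemma strict_episturmian_card_gt1 : 1 < #|A|.
Proof.
have [_ [a [b [ab _]]]] := strict_episturmian_rs_nil.
by apply/card_gt1P; exists a, b; split => //; apply/eqP.
Qed.

End StrictEpisturmian.

Theorem mainTheorem12 (A : finType) (F : seq A -> Prop) (X : seq (seq A)) :
  sturmian_set F -> uniq X ->
  F_maximal_bifix F (fun u => u \in X) ->
  exists w0, F w0 /\ (forall w, F w -> delta X w <= delta X w0) /\
    size X = (#|A| - 1) * delta X w0 + 1.
Proof.
move=> [x [x_strict F_x]] X_uniq [[X_nonnil' [X_prefix X_suffix]] [X_F X_max]].
have X_nonnil : [::] \notin X by apply/negP => /X_nonnil'.
have X_factor u : u \in X -> factor x u by move=> /X_F /F_x.
have X_maximal Y : bifix_code Y -> (forall u, Y u -> factor x u) ->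
    (forall u, u \in X -> Y u) -> forall u, Y u -> u \in X.
  by move=> Y_bifix Y_x; apply: X_max => // u /Y_x /F_x.
have x_rev := strict_episturmian_rev x_strict.
have [w0 [size_w0 rs_w0]] := strict_episturmian_rs_exists x_strict (\max_(u <- X) size u).
exists w0; split; first by apply/F_x; case: rs_w0.
split=> [w /F_x fw|].
  by apply: (delta_le_long_factor x_rev) => //; [case: rs_w0 | rewrite size_w0].
have rs_uniq := strict_episturmian_rs_uniq x_strict.
have rs_ext := strict_episturmian_rs_extends x_strict.
have card_A := strict_episturmian_card_gt1 x_strict.
rewrite (delta_rs_maxlen x_rev X_nonnil X_prefix X_suffix X_factor X_maximal
  rs_ext rs_uniq card_A size_w0 rs_w0).
exact: (size_X_branching x_rev X_nonnil X_prefix X_suffix X_factor X_maximal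
  X_uniq rs_ext card_A).
Qed.
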